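(* Let $\mathbb F$ be a field of characteristic $p$, $S=\{R_0,\dots,R_d\}$ a $p'$-valenced scheme on $X$, $x\in X$, $\mathcal T=\mathcal T(x)$, $E_a^*=E_a^*(x)$, and let $M$ lie in the Jacobson radical of $\mathcal T$. Then (i) there is no $R_a\in S$ with $k_a=1$ and $E_a^*M\neq O$; and (ii) there is no $R_a\in S$ with $k_a=1$ and $ME_a^*\neq O$.
   Context: Let $X$ be a nonempty finite set. A scheme of class $d$ on $X$ is a partition $S=\{R_0,\dots,R_d\}$ of $X\times X$ into nonempty sets such that $R_0=\{(b,b):b\in X\}$; for each $c$ there is $c'$ with $R_{c'}=\{(f,e):(e,f)\in R_c\}$; and for all $i,j,k$ the intersection number $p_{ij}^k=|\{\ell\in X:(m,\ell)\in R_i,(\ell,n)\in R_j\}|$ does not depend on $(m,n)\in R_k$. The valency is $k_a=p_{aa'}^0$. $S$ is $p'$-valenced if no valency $k_a$ is divisible by $p$ (every scheme is $0'$-valenced). For $y\in X$, $yR_a=\{z:(y,z)\in R_a\}$; $A_a\in M_X(\mathbb F)$ is the $(0,1)$ adjacency matrix of $R_a$, $E_a^*(y)$ is the diagonal $(0,1)$-matrix with ones exactly at positions indexed by $yR_a$, $O$ is the zero matrix, and $\mathcal T(y)$ is the $\mathbb F$-subalgebra of $M_X(\mathbb F)$ generated by $A_0,\dots,A_d,E_0^*(y),\dots,E_d^*(y)$. *)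

From mathcomp Require Import all_boot all_order all_algebra.
Set Implicit Arguments. Unset Strict Implicit. Unset Printing Implicit Defensive.
Import GRing.Theory.
Local Open Scope ring_scope.

(* The finite set X is represented as 'I_n; a scheme of class d is given by
   the function r : X -> X -> 'I_d.+1 with R_c = {(y,z) | r y z = c}. *)
Section Scheme.
Variables (n d : nat).
Implicit Types (r : 'I_n -> 'I_n -> 'I_d.+1).

Definition inter_num r (i j : 'I_d.+1) (m m' : 'I_n) : nat :=
  #|[set l : 'I_n | (r m l == i) && (r l m' == j)]|.

Definition is_scheme r : Prop :=
  (0 < n)%N /\
  (forall c : 'I_d.+1, exists y z, r y z = c) /\
  (forall y z, r y z = ord0 <-> y = z) /\
  (forall c : 'I_d.+1, exists c' : 'I_d.+1, forall y z, r z y = c <-> r y z = c') /\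
  (forall i j k : 'I_d.+1, forall m1 n1 m2 n2,
      r m1 n1 = k -> r m2 n2 = k -> inter_num r i j m1 n1 = inter_num r i j m2 n2).

(* |y R_a|; for a scheme this is independent of y and equals k_a = p_{aa'}^0 *)
Definition valency_at r (a : 'I_d.+1) (y : 'I_n) : nat := #|[set z | r y z == a]|.

(* p'-valenced: no valency divisible by p (for p = 0: 0 %| k iff k = 0) *)
Definition p'valenced (p : nat) r : Prop :=
  forall (a : 'I_d.+1) (y : 'I_n), ~~ (p %| valency_at r a y)%N.

Variable F : fieldType.

Definition adj_mx r (a : 'I_d.+1) : 'M[F]_n := \matrix_(i, j) ((r i j == a)%:R).
Definition dual_idem r (y : 'I_n) (a : 'I_d.+1) : 'M[F]_n :=
  \matrix_(i, j) (((i == j) && (r y i == a))%:R).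

Inductive in_T r (y : 'I_n) : 'M[F]_n -> Prop :=
  | inT_A a : in_T r y (adj_mx r a)
  | inT_E a : in_T r y (dual_idem r y a)
  | inT_0 : in_T r y 0
  | inT_add M N : in_T r y M -> in_T r y N -> in_T r y (M + N)
  | inT_scale (c : F) M : in_T r y M -> in_T r y (c *: M)
  | inT_mul M N : in_T r y M -> in_T r y N -> in_T r y (M * N).

Definition left_ideal (T L : 'M[F]_n -> Prop) : Prop :=
  (forall M, L M -> T M) /\ L 0 /\
  (forall M N, L M -> L N -> L (M + N)) /\
  (forall M, L M -> L (- M)) /\
  (forall Y M, T Y -> L M -> L (Y * M)).

Definition maximal_left_ideal (T L : 'M[F]_n -> Prop) : Prop :=
  left_ideal T L /\ (exists M, T M /\ ~ L M) /\
  (forall L', left_ideal T L' -> (forall M, L M -> L' M) ->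
     (forall M, L' M <-> L M) \/ (forall M, L' M <-> T M)).

Definition jacobson_radical (T : 'M[F]_n -> Prop) (M : 'M[F]_n) : Prop :=
  T M /\ forall L, maximal_left_ideal T L -> L M.

End Scheme.

Definition has_char (F : fieldType) (p : nat) : Prop :=
  if p == 0%N then [pchar F] =i pred0 else p \in [pchar F].

From mathcomp Require Import all_boot all_order all_algebra.
From Stdlib Require Import Classical.

Set Implicit Arguments.
Unset Strict Implicit.
Unset Printing Implicit Defensive.
Import GRing.Theory.
Local Open Scope ring_scope.

(* Let e_x be the characteristic vector of x and chi_i that of xR_i.  Every
   vector of T e_x is constant on the classes xR_i, and since no valency
   vanishes in F, every nonzero class-constant vector v generates e_x: a
   suitable multiple of E_0^* A_i sends v to e_x.  So T e_x is a simple
   T-module, the annihilator of each nonzero chi_i = A_i^T e_x is a maximal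
   left ideal, and every radical element M satisfies M chi_i = 0.  Row x
   of a radical element is then a class-constant row vector orthogonal to
   every chi_i, hence zero.  If k_a = 1 then xR_a = {z}, chi_a = e_z and
   E_a^* = e_z e_z^T, so M E_a^* = (M chi_a) e_z^T = 0 and
   E_a^* M = e_z (row x of A_a M) = 0. *)

Lemma natr_neq0_has_char (F : fieldType) (p k : nat) :
  has_char F p -> ~~ (p %| k)%N -> k%:R != 0 :> F.
Proof.
rewrite /has_char; case: eqP => [-> /pcharf0P char0 | _ charp].
  by rewrite dvd0n char0.
by rewrite (dvdn_pcharf charp).
Qed.

Lemma eq_sum_fibre_const (V : nmodType) (I J : finType) (g : I -> J)
    (f : I -> V) (P Q : pred I) :
  (forall i i', g i = g i' -> f i = f i') ->
  (forall j, #|[pred i | g i == j & P i]| = #|[pred i | g i == j & Q i]|) ->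
  \sum_(i | P i) f i = \sum_(i | Q i) f i.
Proof.
move=> f_fibre card_PQ.
rewrite (partition_big g xpredT) // [RHS](partition_big g xpredT) //.
apply: eq_bigr => j _.
have [i0 /eqP gi0 | fibre0] := pickP (fun i => g i == j); last first.
  by rewrite !big_pred0 // => i; rewrite fibre0 andbF.
have f_i0 R i : R i && (g i == j) -> f i = f i0.
  by case/andP=> _ /eqP; rewrite -gi0 => /f_fibre.
rewrite (eq_bigr _ (f_i0 P)) [RHS](eq_bigr _ (f_i0 Q)).
have swap R : #|[pred i | R i && (g i == j)]| = #|[pred i | g i == j & R i]|.
  by apply: eq_card => i; rewrite !inE andbC.
by rewrite !sumr_const; congr (_ *+ _); rewrite swap card_PQ -swap.
Qed.

Section LeftIdeals.
Variables (F : fieldType) (n : nat) (T : 'M[F]_n -> Prop).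
Hypotheses (T0 : T 0) (T1 : T 1)
  (T_add : forall M N, T M -> T N -> T (M + N))
  (T_opp : forall M, T M -> T (- M))
  (T_mul : forall M N, T M -> T N -> T (M * N)).

Lemma jacobson_radical_mull Y M :
  T Y -> jacobson_radical T M -> jacobson_radical T (Y * M).
Proof.
move=> TY [TM radM]; split; first exact: T_mul.
move=> L maxL; have [[_ [_ [_ [_ L_mull]]]] _] := maxL.
exact: L_mull (radM L maxL).
Qed.

Definition annihilator (w : 'cV[F]_n) (Y : 'M[F]_n) : Prop := T Y /\ Y *m w = 0.

Lemma annihilator_left_ideal w : left_ideal T (annihilator w).
Proof.
split; first by move=> M [].
split; first by rewrite /annihilator mul0mx.
split.
  move=> M N [TM Mw] [TN Nw].
  by split; [exact: T_add | rewrite mulmxDl Mw Nw addr0].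
split.
  by move=> M [TM Mw]; split; [exact: T_opp | rewrite mulNmx Mw oppr0].
move=> Y M TY [TM Mw].
by split; [exact: T_mul | rewrite -mulmxE -mulmxA Mw mulmx0].
Qed.

(* The hypotheses say that [T *m e] is a simple module containing [w]. *)
Lemma annihilator_maximal (e w : 'cV[F]_n) :
  w != 0 -> (exists2 W, T W & W *m e = w) ->
  (forall Y, T Y -> Y *m w != 0 -> exists2 Z, T Z & Z *m (Y *m w) = e) ->
  maximal_left_ideal T (annihilator w).
Proof.
move=> w_neq0 [W TW We] generates.
split; first exact: annihilator_left_ideal.
split; first by exists 1; split=> // -[_]; rewrite mul1mx => /eqP; apply/negP.
move=> L [L_T [_ [L_add [_ L_mull]]]] annL.
have [[Y [LY Yw]] | L_ann] := classic (exists Y, L Y /\ Y *m w != 0); last first.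
  left=> M; split=> [LM | /annL //]; split; first exact: L_T.
  by case: (eqVneq (M *m w) 0) => // Mw; case: L_ann; exists M.
have [Z TZ ZYw] := generates Y (L_T Y LY) Yw.
right=> M; split=> [/L_T // | TM].
(* The second summand annihilates [w] because [W Z Y w = W e = w]. *)
have -> : M = M * W * Z * Y + (M - M * W * Z * Y) by rewrite addrC subrK.
have TMWZ : T (M * W * Z) by apply: T_mul => //; apply: T_mul.
apply: L_add; first exact: L_mull.
apply: annL; split.
  by apply: T_add => //; apply: T_opp; apply: T_mul => //; exact: L_T.
by rewrite mulmxBl -!mulmxE -!mulmxA ZYw We subrr.
Qed.

End LeftIdeals.

Section SchemeAlgebra.
Variables (F : fieldType) (n d : nat) (r : 'I_n -> 'I_n -> 'I_d.+1) (x : 'I_n).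
Hypothesis r_scheme : is_scheme r.

Local Notation A := (adj_mx F r).
Local Notation E := (dual_idem F r x).
Local Notation T := (@in_T n d F r x).

Lemma scheme_diag y z : (r y z == ord0) = (y == z).
Proof. by case: r_scheme => _ [_ [diagP _]]; apply/eqP/eqP => /diagP. Qed.

Lemma scheme_tr a : exists a', forall y z, (r z y == a) = (r y z == a').
Proof.
case: r_scheme => _ [_ [_ [trP _]]]; have [a' tr_a] := trP a.
by exists a' => y z; apply/eqP/eqP => /tr_a.
Qed.

Lemma scheme_inter_num i j {y z y' z'} :
  r y z = r y' z' -> inter_num r i j y z = inter_num r i j y' z'.
Proof.
by case: r_scheme => _ [_ [_ [_ interP]]] eq_r; apply: interP eq_r erefl.
Qed.

Lemma adj_mx0 : A ord0 = 1.
Proof. by apply/matrixP => i j; rewrite !mxE scheme_diag. Qed.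

Lemma in_T1 : T 1.
Proof. rewrite -adj_mx0; exact: inT_A. Qed.

Lemma in_T_opp Y : T Y -> T (- Y).
Proof. by rewrite -scaleN1r; apply: inT_scale. Qed.

Lemma in_T_tr Y : T Y -> T Y^T.
Proof.
elim=> {Y} [a | a | | Y Z _ TY _ TZ | c Y _ TY | Y Z _ TY _ TZ].
- have [a' tr_a] := scheme_tr a.
  suff -> : (A a)^T = A a' by apply: inT_A.
  by apply/matrixP => i j; rewrite !mxE tr_a.
- suff -> : (E a)^T = E a by apply: inT_E.
  by apply/matrixP => i j; rewrite !mxE; case: eqVneq => // ->.
- by rewrite trmx0; apply: inT_0.
- by rewrite linearD; apply: inT_add.
- by rewrite linearZ; apply: inT_scale.
- by rewrite -mulmxE trmx_mul mulmxE; apply: inT_mul.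
Qed.

Definition class_constant (u : 'rV[F]_n) : Prop :=
  forall l l', r x l = r x l' -> u 0 l = u 0 l'.

Definition class_col (i : 'I_d.+1) : 'cV[F]_n := \col_l (r x l == i)%:R.

Lemma dual_idem_diag a : E a = diag_mx (class_col a)^T.
Proof. by apply/matrixP => i j; rewrite !mxE eq_sym; case: eqVneq => // ->. Qed.

Lemma class_constant_mulmx u Y :
  T Y -> class_constant u -> class_constant (u *m Y).
Proof.
move=> TY; elim: TY u => {Y} [b | a | | Y Z _ IHY _ IHZ | c Y _ IHY |
  Y Z _ IHY _ IHZ] u u_cst.
- have sum_class l : (u *m A b) 0 l = \sum_(m | r m l == b) u 0 m.
    rewrite mxE [RHS]big_mkcond; apply: eq_bigr => m _.
    by rewrite mxE; case: eqP; rewrite ?mulr1 ?mulr0.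
  move=> l l' eq_l; rewrite !sum_class; apply: eq_sum_fibre_const u_cst _ => j.
  by have := scheme_inter_num j b eq_l; rewrite /inter_num !cardsE.
- move=> l l' eq_l; rewrite dual_idem_diag mul_mx_diag !mxE.
  by rewrite eq_l (u_cst _ _ eq_l).
- by move=> l l' _; rewrite mulmx0 !mxE.
- move=> l l' eq_l; rewrite mulmxDr [LHS]mxE [RHS]mxE.
  by rewrite (IHY u u_cst _ _ eq_l) (IHZ u u_cst _ _ eq_l).
- move=> l l' eq_l; rewrite -scalemxAr [LHS]mxE [RHS]mxE.
  by rewrite (IHY u u_cst _ _ eq_l).
- by rewrite -mulmxE mulmxA; apply/IHZ/IHY.
Qed.

Lemma class_col_constant i : class_constant (class_col i)^T.
Proof. by move=> l l' eq_l; rewrite !mxE eq_l. Qed.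

Lemma class_constant_mulmx_col Y v :
  T Y -> class_constant v^T -> class_constant (Y *m v)^T.
Proof. by move=> TY; rewrite trmx_mul; apply/class_constant_mulmx/in_T_tr. Qed.

Lemma row_adj_mx i : row x (A i) = (class_col i)^T.
Proof. by apply/rowP => l; rewrite !mxE. Qed.

Lemma class_col0 : class_col ord0 = delta_mx x 0.
Proof. by apply/colP => l; rewrite !mxE scheme_diag eq_sym andbT. Qed.

Lemma dual_idem0 : E ord0 = delta_mx x x.
Proof.
rewrite dual_idem_diag class_col0 trmx_delta.
apply/matrixP => i j; rewrite !mxE eqxx.
by case: (eqVneq i x) => [-> | ] /=; rewrite ?mul0rn // eq_sym.
Qed.

Hypothesis valency_neq0 : forall a, (valency_at r a x)%:R != 0 :> F.

Lemma class_constant_mulmx_class_col u y : class_constant u ->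
  (u *m class_col (r x y)) 0 0 = u 0 y *+ valency_at r (r x y) x.
Proof.
move=> u_cst; rewrite mxE.
transitivity (\sum_(m | r x m == r x y) u 0 y).
  rewrite [RHS]big_mkcond; apply: eq_bigr => m _; rewrite mxE.
  by case: eqP => [/u_cst -> | _]; rewrite ?mulr1 ?mulr0.
by rewrite sumr_const /valency_at cardsE.
Qed.

Lemma class_constant_eq0 u :
  class_constant u -> (forall j, u *m class_col j = 0) -> u = 0.
Proof.
move=> u_cst u_ann; apply/rowP => l.
have := congr1 (fun B : 'M_1 => B 0 0) (u_ann (r x l)).
rewrite /= class_constant_mulmx_class_col // mxE -mulr_natr => /eqP.
by rewrite mulf_eq0 (negbTE (valency_neq0 _)) orbF mxE => /eqP.
Qed.

Lemma delta_generates v : class_constant v^T -> v != 0 ->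
  exists2 Z, T Z & Z *m v = delta_mx x 0.
Proof.
move=> v_cst v_neq0.
have /existsP[i] : [exists i, (class_col i)^T *m v != 0].
  apply: contraNT v_neq0 => /existsPn v_ann; rewrite -trmx_eq0.
  apply/eqP/class_constant_eq0 => // j.
  by apply: trmx_inj; rewrite trmx_mul trmxK trmx0; apply/eqP/negPn/v_ann.
set s := ((class_col i)^T *m v) 0 0; rewrite [_ *m v]mx11_scalar -/s => s_neq0.
have {}s_neq0 : s != 0 by apply: contraNneq s_neq0 => ->; rewrite raddf0.
exists (s^-1 *: (E ord0 * A i)).
  by apply: inT_scale; apply: inT_mul; [apply: inT_E | apply: inT_A].
rewrite -scalemxAl -mulmxE -mulmxA dual_idem0 -(mul_delta_mx (0 : 'I_1)).
rewrite -!mulmxA (mulmxA 'e_x) -rowE row_adj_mx [_ *m v]mx11_scalar -/s.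
by rewrite mul_mx_scalar scalerA mulVf ?scale1r.
Qed.

Lemma annihilator_class_col_maximal i : class_col i != 0 ->
  maximal_left_ideal T (annihilator T (class_col i)).
Proof.
move=> col_neq0.
apply: (annihilator_maximal (@inT_0 _ _ _ r x) in_T1 (@inT_add _ _ _ r x)
  in_T_opp (@inT_mul _ _ _ r x) (e := delta_mx x 0) col_neq0).
- exists (A i)^T; first exact/in_T_tr/inT_A.
  by rewrite -trmx_delta -trmx_mul -rowE row_adj_mx trmxK.
- move=> Y TY; apply: delta_generates.
  exact/class_constant_mulmx_col/class_col_constant.
Qed.

Lemma radical_mulmx_class_col N i :
  jacobson_radical T N -> N *m class_col i = 0.
Proof.
move=> [_ radN].
have [-> | col_neq0] := eqVneq (class_col i) 0; first exact: mulmx0.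
by have [] := radN _ (annihilator_class_col_maximal col_neq0).
Qed.

Lemma radical_row0 N : jacobson_radical T N -> row x N = 0.
Proof.
move=> radN; apply: class_constant_eq0 => [|j].
  rewrite rowE -trmx_delta -class_col0; apply: class_constant_mulmx radN.1 _.
  exact: class_col_constant.
by rewrite rowE -mulmxA radical_mulmx_class_col ?mulmx0.
Qed.

Lemma dual_idem_valency1 a :
  valency_at r a x = 1%N -> E a = class_col a *m (class_col a)^T.
Proof.
move=> /eqP/cards1P[z class_a].
have class_aE l : (r x l == a) = (l == z).
  by move/setP: class_a => /(_ l); rewrite !inE.
apply/matrixP => i j; rewrite !mxE big_ord1 !mxE !class_aE -natrM mulnb.
have [-> | ij] := eqVneq i j; rewrite ?andbb //.
by case: eqVneq => // <-; rewrite eq_sym (negbTE ij).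
Qed.

End SchemeAlgebra.

Theorem lemma5p1 (F : fieldType) (p n d : nat)
    (r : 'I_n -> 'I_n -> 'I_d.+1) (x : 'I_n) (M : 'M[F]_n) :
  has_char F p ->
  is_scheme r ->
  p'valenced p r ->
  jacobson_radical (in_T r x) M ->
  (~ exists a : 'I_d.+1, valency_at r a x = 1%N /\ dual_idem F r x a * M != 0) /\
  (~ exists a : 'I_d.+1, valency_at r a x = 1%N /\ M * dual_idem F r x a != 0).
Proof.
move=> charF r_scheme p'val radM.
have valency_neq0 a : (valency_at r a x)%:R != 0 :> F.
  exact: natr_neq0_has_char charF (p'val a x).
split=> -[a [valency1]]; apply/negP; rewrite negbK dual_idem_valency1 //; apply/eqP.
- have radAM : jacobson_radical (in_T r x) (adj_mx F r a * M).
    apply: jacobson_radical_mull radM; [exact: inT_mul | exact: inT_A].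
  rewrite -mulmxE -mulmxA -row_adj_mx rowE -mulmxA -rowE mulmxE.
  by rewrite (radical_row0 r_scheme valency_neq0 radAM) mulmx0.
- rewrite -mulmxE mulmxA.
  by rewrite (radical_mulmx_class_col r_scheme valency_neq0 _ radM) mul0mx.
Qed.
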